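(* Let $N\ge 1$ be an integer, let $\eta_1,\eta_2$ be real with $0<\eta_1,\eta_2<1$, $\eta_1+\eta_2<1$, and let $u_1,v_1,u_2,v_2$ be complex numbers. Then the polynomials $P_{m_1,m_2}$ ($m_1,m_2\ge0$ integers, $m_1+m_2\le N$) are mutually orthogonal with respect to the trinomial weight, i.e. \[ \sum_{\substack{x_1,x_2\ge 0\\ x_1+x_2\le N}} b_2(x_1,x_2;N;\eta_1,\eta_2)\,P_{m_1,m_2}(x_1,x_2)P_{n_1,n_2}(x_1,x_2)=0\quad\text{whenever }(m_1,m_2)\neq(n_1,n_2), \] if and only if \[ \text{(a) } \eta_1u_1+\eta_2v_1=1,\qquad \text{(b) } \eta_1u_2+\eta_2v_2=1,\qquad \text{(c) } \eta_1u_1u_2+\eta_2v_1v_2=1 . \] (For the sufficiency direction one may additionally assume $u_1,u_2,v_1,v_2\notin\{0,1\}$ and $u_1v_2-u_2v_1\neq 0$.)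
   Context: Notation: $(a)_k=a(a+1)\cdots(a+k-1)$, $(a)_0=1$, is the Pochhammer symbol. For a nonnegative integer $N$ and nonnegative integers $m_1,m_2,x_1,x_2$ with $m_1+m_2\le N$, $x_1+x_2\le N$, and parameters $u_1,v_1,u_2,v_2$, define the 2-variable Krawtchouk polynomial \[ P_{m_1,m_2}(x_1,x_2)=\sum_{\substack{i,j,k,l\ge 0\\ i+j+k+l\le N}}\frac{(-m_1)_{i+j}(-m_2)_{k+l}(-x_1)_{i+k}(-x_2)_{j+l}}{i!\,j!\,k!\,l!\,(-N)_{i+j+k+l}}\,u_1^i v_1^j u_2^k v_2^l . \] The trinomial distribution is $b_2(x_1,x_2;N;\eta_1,\eta_2)=\frac{N!}{x_1!\,x_2!\,(N-x_1-x_2)!}\eta_1^{x_1}\eta_2^{x_2}(1-\eta_1-\eta_2)^{N-x_1-x_2}$. *)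

(* complex numbers are modelled by an arbitrary
   numClosedFieldType C (e.g. algC); "real" eta's are elements of C with
   0 < eta < 1 (which forces them to be real). *)
From HB Require Import structures.
From mathcomp Require Import all_boot all_order all_algebra.
Set Implicit Arguments. Unset Strict Implicit. Unset Printing Implicit Defensive.
Import Order.TTheory GRing.Theory Num.Theory.
Local Open Scope ring_scope.

Definition poch (C : numClosedFieldType) (a : C) (k : nat) : C :=
  \prod_(i < k) (a + i%:R).

Definition Kraw2 (C : numClosedFieldType) (N : nat) (u1 v1 u2 v2 : C)
    (m1 m2 x1 x2 : nat) : C :=
  \sum_(i < N.+1) \sum_(j < N.+1) \sum_(k < N.+1) \sum_(l < N.+1)
    if (i + j + k + l <= N)%N then
      poch (- m1%:R) (i + j) * poch (- m2%:R) (k + l)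
      * poch (- x1%:R) (i + k) * poch (- x2%:R) (j + l)
      / ((i`! * j`! * k`! * l`!)%:R * poch (- N%:R) (i + j + k + l))
      * u1 ^+ i * v1 ^+ j * u2 ^+ k * v2 ^+ l
    else 0.

Definition trinom (C : numClosedFieldType) (N x1 x2 : nat) (eta1 eta2 : C) : C :=
  N`!%:R / (x1`! * x2`! * (N - x1 - x2)`!)%:R
  * eta1 ^+ x1 * eta2 ^+ x2 * (1 - eta1 - eta2) ^+ (N - x1 - x2).

Definition Kraw2_orthogonal (C : numClosedFieldType) (N : nat)
    (eta1 eta2 u1 v1 u2 v2 : C) : Prop :=
  forall m1 m2 n1 n2 : nat,
    (m1 + m2 <= N)%N -> (n1 + n2 <= N)%N -> (m1, m2) <> (n1, n2) ->
    \sum_(x1 < N.+1) \sum_(x2 < N.+1)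
      (if (x1 + x2 <= N)%N then
         trinom N x1 x2 eta1 eta2 * Kraw2 N u1 v1 u2 v2 m1 m2 x1 x2
         * Kraw2 N u1 v1 u2 v2 n1 n2 x1 x2
       else 0) = 0.

From HB Require Import structures.
From mathcomp Require Import all_boot all_order all_algebra.
From mathcomp Require Import ring zify.
Set Implicit Arguments. Unset Strict Implicit. Unset Printing Implicit Defensive.
Import Order.TTheory GRing.Theory Num.Theory.
Local Open Scope ring_scope.

(* With w_0 = 1 + s1 + s2, w_1 = 1 + (1-u1) s1 + (1-u2) s2 and
   w_2 = 1 + (1-v1) s1 + (1-v2) s2, the polynomial
     g_x(s) = w_0(s)^(N-x1-x2) w_1(s)^x1 w_2(s)^x2
   has coefficient (N; m1, m2) P_{m1,m2}(x) at s1^m1 s2^m2.  By the trinomial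
   theorem, sum_x b_2(x) g_x(s) g_x(t) = G(s,t)^N for the kernel
     G(s,t) = (1-eta1-eta2) w_0(s) w_0(t) + eta1 w_1(s) w_1(t) + eta2 w_2(s) w_2(t),
   whose coefficients are the moments of the three affine forms:
     G = 1 + A1 (s1+t1) + A2 (s2+t2) + D1 s1t1 + B (s1t2+s2t1) + D2 s2t2
   with A1 = 1 - (eta1 u1 + eta2 v1), A2 = 1 - (eta1 u2 + eta2 v2) and
   B = eta1 u1 u2 + eta2 v1 v2 - 1 once A1 = A2 = 0.  Orthogonality makes the
   coefficients N A1, N A2 of s1, s2 and then N B of s1 t2 in G^N vanish;
   conversely if A1 = A2 = B = 0 then G^N only contains the monomials
   (s1 t1)^i (s2 t2)^k, which is orthogonality. *)

Definition trinomial_coef (n a b : nat) : nat := 'C(n, a) * 'C(n - a, b).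

Lemma exprD3n (R : comPzRingType) (a b c : R) (n K : nat) : (n < K)%N ->
  (a + b + c) ^+ n = \sum_(i < K) \sum_(k < K)
     (if (i + k <= n)%N then (trinomial_coef n i k)%:R * a ^+ (n - i - k) * b ^+ i * c ^+ k
      else 0).
Proof.
move=> ltnK; rewrite (addrAC a b c) exprDn.
rewrite (big_ord_widen K (fun i => (a + c) ^+ (n - i) * b ^+ i *+ 'C(n, i))) //.
rewrite big_mkcond /=; apply: eq_bigr => i _; case: ifPn => [lein | ltni]; last first.
  by rewrite big1 // => k _; case: ifP => // le_ikn; case/negP: ltni; lia.
rewrite exprDn (big_ord_widen K (fun k => a ^+ (n - i - k) * c ^+ k *+ 'C(n - i, k)));
  last by lia.
rewrite big_mkcond /= mulr_suml -sumrMnl; apply: eq_bigr => k _.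
have -> : (k < (n - i).+1)%N = (i + k <= n)%N by lia.
case: ifP => _; last by rewrite mul0r mul0rn.
by rewrite -(mulr_natl _ 'C(n, i)) -(mulr_natl _ 'C(n - i, k)) /trinomial_coef natrM; ring.
Qed.

Lemma mulr_sum2_sum2 (R : pzSemiRingType) K (w : R) (F G : 'I_K -> 'I_K -> R) :
  w * (\sum_(i < K) \sum_(k < K) F i k) * (\sum_(j < K) \sum_(l < K) G j l)
  = \sum_(i < K) \sum_(j < K) \sum_(k < K) \sum_(l < K) w * F i k * G j l.
Proof.
rewrite [w * _]mulr_sumr mulr_suml; apply: eq_bigr => i _.
rewrite [w * _]mulr_sumr mulr_suml [RHS]exchange_big /=; apply: eq_bigr => k _.
by rewrite mulr_sumr; apply: eq_bigr => j _; rewrite mulr_sumr.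
Qed.

Lemma rmorph_trinomial_term (K R S : comNzRingType) (h : {rmorphism K -> R})
    (f g : {rmorphism R -> S}) (e0 e1 e2 : K) (w0 w1 w2 : R) (t x1 x2 y : nat) :
  f (h (t%:R * e1 ^+ x1 * e2 ^+ x2 * e0 ^+ y) * (w0 ^+ y * w1 ^+ x1 * w2 ^+ x2))
    * g (w0 ^+ y * w1 ^+ x1 * w2 ^+ x2)
  = t%:R * (f (h e0 * w0) * g w0) ^+ y * (f (h e1 * w1) * g w1) ^+ x1
    * (f (h e2 * w2) * g w2) ^+ x2.
Proof. by rewrite !rmorphM !rmorphXn !rmorph_nat !exprMn; ring. Qed.

Section Factorials.
Variable C : numClosedFieldType.

Lemma natr_fact_neq0 n : n`!%:R != 0 :> C.
Proof. by rewrite pnatr_eq0 -lt0n fact_gt0. Qed.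

Lemma trinomial_coefE n a b : (a + b <= n)%N ->
  (trinomial_coef n a b)%:R = n`!%:R / (a`!%:R * b`!%:R * (n - a - b)`!%:R) :> C.
Proof.
move=> le_abn; have le_an : (a <= n)%N by lia.
have le_b : (b <= n - a)%N by lia.
apply: (canRL (mulfK _)); first by rewrite !mulf_neq0 ?natr_fact_neq0.
by rewrite -(bin_fact le_an) -(bin_fact le_b) /trinomial_coef !natrM; ring.
Qed.

Lemma trinomial_coef_neq0 n a b : (a + b <= n)%N -> (trinomial_coef n a b)%:R != 0 :> C.
Proof. by move=> le_abn; rewrite pnatr_eq0 -lt0n muln_gt0 !bin_gt0; lia. Qed.

Lemma pochNnE n k : (k <= n)%N ->
  poch (- n%:R : C) k = (-1) ^+ k * n`!%:R / (n - k)`!%:R.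
Proof.
elim: k => [|k IHk] le_kn; first by rewrite /poch big_ord0 subn0 expr0 mul1r divff ?natr_fact_neq0.
rewrite /poch big_ord_recr /= -/(poch _ k) IHk 1?ltnW //.
have -> : - n%:R + k%:R = - (n - k)%:R :> C by rewrite natrB 1?ltnW // opprB addrC.
rewrite -(subnSK le_kn) factS natrM exprS.
by field; rewrite natr_fact_neq0 addrC natr1 pnatr_eq0.
Qed.

Lemma pochNn_eq0 n k : (n < k)%N -> poch (- n%:R : C) k = 0.
Proof. by move=> lt_nk; rewrite /poch (bigD1 (Ordinal lt_nk)) //= addNr mul0r. Qed.

(* The (i, j, k, l) summand of (N; m1, m2) P_{m1,m2}(x1, x2), in the form in
   which it arises from expanding the generating function Kraw2_gen below. *)
Lemma Kraw2_termE N m1 m2 x1 x2 i j k l (u1 v1 u2 v2 : C) :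
    (x1 + x2 <= N)%N -> (m1 + m2 <= N)%N ->
  (trinomial_coef N m1 m2)%:R * (if (i + j + k + l <= N)%N then
      poch (- m1%:R) (i + j) * poch (- m2%:R) (k + l)
      * poch (- x1%:R) (i + k) * poch (- x2%:R) (j + l)
      / ((i`! * j`! * k`! * l`!)%:R * poch (- N%:R) (i + j + k + l))
      * u1 ^+ i * v1 ^+ j * u2 ^+ k * v2 ^+ l
    else 0)
  = if [&& (i + k <= x1)%N, (j + l <= x2)%N, (i + j <= m1)%N & (k + l <= m2)%N] then
      (trinomial_coef x1 i k)%:R * (trinomial_coef x2 j l)%:R
      * (trinomial_coef (N - (i + j + k + l)) (m1 - (i + j)) (m2 - (k + l)))%:R
      * ((- u1) ^+ i * (- v1) ^+ j * (- u2) ^+ k * (- v2) ^+ l)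
    else 0.
Proof.
move=> le_xN le_mN.
have [le_ik|/pochNn_eq0->] := leqP (i + k) x1; last by case: ifP; rewrite !(mul0r, mulr0).
have [le_jl|/pochNn_eq0->] := leqP (j + l) x2; last by case: ifP; rewrite !(mul0r, mulr0).
have [le_ij|/pochNn_eq0->] := leqP (i + j) m1; last by case: ifP; rewrite !(mul0r, mulr0).
have [le_kl|/pochNn_eq0->] := leqP (k + l) m2; last by case: ifP; rewrite !(mul0r, mulr0).
have le_sN : (i + j + k + l <= N)%N by lia.
rewrite le_sN /= !pochNnE // !trinomial_coefE //; last by lia.
have -> : (N - (i + j + k + l) - (m1 - (i + j)) - (m2 - (k + l)) = N - m1 - m2)%N by lia.
rewrite -(subnDA i) -(subnDA j) (exprNn u1) (exprNn v1) (exprNn u2) (exprNn v2) !exprD !natrM.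
by field; rewrite !natr_fact_neq0 !signr_eq0.
Qed.

End Factorials.

Local Notation "c %:P2" := (c%:P%:P) (at level 2, left associativity, format "c %:P2").

Section Bivariate.
Variable R : comNzRingType.
Implicit Types (p r : {poly {poly R}}) (c : R).

Definition X1 : {poly {poly R}} := 'X.
Definition X2 : {poly {poly R}} := 'X%:P.
Definition coef2 p i j : R := p`_i`_j.
Arguments coef2 p (i j)%_N.
Definition lin2 (c0 c1 c2 : R) : {poly {poly R}} := c0%:P2 + c1%:P2 * X1 + c2%:P2 * X2.

Lemma coef2_sum (I : Type) (s : seq I) (P : pred I) (F : I -> {poly {poly R}}) i j :
  coef2 (\sum_(x <- s | P x) F x) i j = \sum_(x <- s | P x) coef2 (F x) i j.
Proof. by rewrite /coef2 !coef_sum. Qed.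

Lemma coef2D p r i j : coef2 (p + r) i j = coef2 p i j + coef2 r i j.
Proof. by rewrite /coef2 !coefD. Qed.

Lemma coef2_polyC2M c p i j : coef2 (c%:P2 * p) i j = c * coef2 p i j.
Proof. by rewrite /coef2 !coefCM. Qed.

Lemma coef2_mulpolyC2 p c i j : coef2 (p * c%:P2) i j = coef2 p i j * c.
Proof. by rewrite mulrC coef2_polyC2M mulrC. Qed.

Lemma coef2_natM n p i j : coef2 (n%:R * p) i j = n%:R * coef2 p i j.
Proof.
have -> : n%:R = (n%:R : R)%:P2 :> {poly {poly R}} by rewrite !rmorph_nat.
exact: coef2_polyC2M.
Qed.

Lemma coef2_mulX12 p a b i j : coef2 (p * X1 ^+ a * X2 ^+ b) i j =
  if (a <= i)%N && (b <= j)%N then coef2 p (i - a) (j - b) else 0.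
Proof.
rewrite /coef2 /X1 /X2 -rmorphXn coefMC !coefMXn.
by case: (ltnP i a); case: (ltnP j b); rewrite /= ?coef0.
Qed.

Lemma coef2_monomial c a b i j :
  coef2 (c%:P2 * X1 ^+ a * X2 ^+ b) i j = if (i == a) && (j == b) then c else 0.
Proof.
rewrite coef2_mulX12 /coef2 coefC.
have [le_ai|lt_ia] := leqP a i; last by rewrite (ltn_eqF lt_ia).
have [le_bj|lt_jb] := leqP b j; last by rewrite (ltn_eqF lt_jb) !andbF.
rewrite /= -(eqn_add2r a) subnK // add0n; case: (i == a); last by rewrite coef0.
by rewrite coefC -(eqn_add2r b) subnK.
Qed.

Lemma coef2_sum_monomial K (P : nat -> nat -> bool) (c : nat -> nat -> R) a b :
  coef2 (\sum_(i < K) \sum_(k < K)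
           (if P i k then (c i k)%:P2 * X1 ^+ i * X2 ^+ k else 0)) a b
  = if [&& (a < K)%N, (b < K)%N & P a b] then c a b else 0.
Proof.
rewrite coef2_sum (eq_bigr (fun i : 'I_K => if i == a :> nat then
    (if (b < K)%N && P a b then c a b else 0) else 0)) => [|i _].
  by rewrite -big_mkcond (big_ord1_eq _ (fun=> _)); case: (a < K)%N.
rewrite coef2_sum (eq_bigr (fun k : 'I_K => if k == b :> nat then
    (if (i == a :> nat) && P a b then c a b else 0) else 0)) => [|k _].
  by rewrite -big_mkcond (big_ord1_eq _ (fun=> _)); case: (i == a :> nat); case: (b < K)%N.
rewrite (fun_if (fun p => coef2 p a b)) coef2_monomial /coef2 coef0 coef0.
by case: (eqVneq (i : nat) a) => [<-|ne_ia]; case: (eqVneq (k : nat) b) => [<-|ne_kb];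
  rewrite ?eqxx ?andbF ?andbT //= ?(negbTE ne_ia) ?(negbTE ne_kb); case: ifP.
Qed.

Lemma coef2_lin2 c0 c1 c2 i j : coef2 (lin2 c0 c1 c2) i j =
  (if (i == 0) && (j == 0) then c0 else 0) + (if (i == 1) && (j == 0) then c1 else 0)
  + (if (i == 0) && (j == 1) then c2 else 0).
Proof.
have -> : lin2 c0 c1 c2 = c0%:P2 * X1 ^+ 0 * X2 ^+ 0 + c1%:P2 * X1 ^+ 1 * X2 ^+ 0
                          + c2%:P2 * X1 ^+ 0 * X2 ^+ 1.
  by rewrite /lin2; ring.
by rewrite !coef2D !coef2_monomial.
Qed.

Lemma coef2_lin2_00 c0 c1 c2 : coef2 (lin2 c0 c1 c2) 0 0 = c0.
Proof. by rewrite coef2_lin2 /= !addr0. Qed.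

Lemma coef2_lin2_10 c0 c1 c2 : coef2 (lin2 c0 c1 c2) 1 0 = c1.
Proof. by rewrite coef2_lin2 /= add0r addr0. Qed.

Lemma coef2_lin2_01 c0 c1 c2 : coef2 (lin2 c0 c1 c2) 0 1 = c2.
Proof. by rewrite coef2_lin2 /= !add0r. Qed.

Lemma lin2_100 : lin2 1 0 0 = 1.
Proof. by rewrite /lin2; ring. Qed.

Lemma lin2_sum3 (p0 p1 p2 a0 a1 a2 b0 b1 b2 c0 c1 c2 : R) :
  p0%:P2 * lin2 a0 b0 c0 + p1%:P2 * lin2 a1 b1 c1 + p2%:P2 * lin2 a2 b2 c2
  = lin2 (p0 * a0 + p1 * a1 + p2 * a2) (p0 * b0 + p1 * b1 + p2 * b2)
         (p0 * c0 + p1 * c1 + p2 * c2).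
Proof. by rewrite /lin2; ring. Qed.

Lemma lin2_sum3M (e0 e1 e2 c0 c1 c2 a0 a1 a2 b0 b1 b2 : R) :
  e0%:P2 * lin2 1 a0 b0 * c0%:P2 + e1%:P2 * lin2 1 a1 b1 * c1%:P2
    + e2%:P2 * lin2 1 a2 b2 * c2%:P2
  = lin2 (e0 * c0 + e1 * c1 + e2 * c2) (e0 * c0 * a0 + e1 * c1 * a1 + e2 * c2 * a2)
         (e0 * c0 * b0 + e1 * c1 * b1 + e2 * c2 * b2).
Proof. by rewrite /lin2; ring. Qed.

Lemma coef2_lin2X (a b : R) n i j : coef2 (lin2 1 a b ^+ n) i j =
  if (i + j <= n)%N then (trinomial_coef n i j)%:R * a ^+ i * b ^+ j else 0.
Proof.
have -> : lin2 1 a b = 1 + a%:P2 * X1 + b%:P2 * X2 by rewrite /lin2; ring.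
rewrite (exprD3n _ _ _ (ltnSn n)).
have termE i' k' j' (t : nat) : t%:R * 1 ^+ j' * (a%:P2 * X1) ^+ i' * (b%:P2 * X2) ^+ k'
    = (t%:R * a ^+ i' * b ^+ k')%:P2 * X1 ^+ i' * X2 ^+ k'.
  by rewrite expr1n !exprMn !rmorphM !rmorphXn !rmorph_nat; ring.
under eq_bigr => i' _ do under eq_bigr => k' _ do rewrite termE.
rewrite (coef2_sum_monomial _ (fun i' k' => i' + k' <= n)%N
  (fun i' k' => (trinomial_coef n i' k')%:R * a ^+ i' * b ^+ k')) /=.
have [le_ijn|_] := leqP (i + j) n; last by rewrite !andbF.
by rewrite andbT; have -> : (i < n.+1)%N && (j < n.+1)%N by lia.
Qed.

Lemma coef2M00 p r : coef2 (p * r) 0 0 = coef2 p 0 0 * coef2 r 0 0.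
Proof. by rewrite /coef2 !coef0M. Qed.

Lemma coef2M10 p r :
  coef2 (p * r) 1 0 = coef2 p 0 0 * coef2 r 1 0 + coef2 p 1 0 * coef2 r 0 0.
Proof. by rewrite /coef2 coefM !big_ord_recr big_ord0 /= add0r coefD !coef0M. Qed.

Lemma coef2M01 p r :
  coef2 (p * r) 0 1 = coef2 p 0 0 * coef2 r 0 1 + coef2 p 0 1 * coef2 r 0 0.
Proof. by rewrite /coef2 coef0M coefM !big_ord_recr big_ord0 /= add0r. Qed.

Lemma coef2X00 p n : coef2 (p ^+ n) 0 0 = coef2 p 0 0 ^+ n.
Proof.
elim: n => [|n IHn]; first by rewrite !expr0 /coef2 !coef1.
by rewrite !exprS coef2M00 IHn.
Qed.

Lemma coef2X10 p n : coef2 p 0 0 = 1 -> coef2 (p ^+ n) 1 0 = n%:R * coef2 p 1 0.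
Proof.
move=> p00; elim: n => [|n IHn]; first by rewrite expr0 mul0r /coef2 coef1 /= coef0.
by rewrite exprS coef2M10 IHn coef2X00 p00 expr1n; ring.
Qed.

Lemma coef2X01 p n : coef2 p 0 0 = 1 -> coef2 (p ^+ n) 0 1 = n%:R * coef2 p 0 1.
Proof.
move=> p00; elim: n => [|n IHn]; first by rewrite expr0 mul0r /coef2 coef1 /= coef1.
by rewrite exprS coef2M01 IHn coef2X00 p00 expr1n; ring.
Qed.

End Bivariate.

Arguments X1 {R}.
Arguments X2 {R}.

Lemma coef2_lin2X_diag (R : comNzRingType) (d1 d2 : R) n m1 m2 n1 n2 :
    (m1, m2) != (n1, n2) ->
  coef2 (coef2 (lin2 1 (lin2 0 d1 0) (lin2 0 0 d2) ^+ n) n1 n2) m1 m2 = 0.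
Proof.
move=> ne_mn; rewrite coef2_lin2X; case: ifP => _; last by rewrite /coef2 !coef0.
have -> : (trinomial_coef n n1 n2)%:R * lin2 0 d1 0 ^+ n1 * lin2 0 0 d2 ^+ n2
    = ((trinomial_coef n n1 n2)%:R * d1 ^+ n1 * d2 ^+ n2)%:P2 * X1 ^+ n1 * X2 ^+ n2.
  have -> : lin2 0 d1 0 = d1%:P2 * X1 by rewrite /lin2; ring.
  have -> : lin2 0 0 d2 = d2%:P2 * X2 by rewrite /lin2; ring.
  by rewrite !exprMn !rmorphM !rmorphXn !rmorph_nat; ring.
rewrite coef2_monomial; case: eqP => [em1|] //; case: eqP => [em2|] //.
by move: ne_mn; rewrite em1 em2 eqxx.
Qed.

Section GeneratingFunction.
Variables (C : numClosedFieldType) (N : nat) (eta1 eta2 u1 v1 u2 v2 : C).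

Let w0 : {poly {poly C}} := lin2 1 1 1.
Let w1 : {poly {poly C}} := lin2 1 (1 - u1) (1 - u2).
Let w2 : {poly {poly C}} := lin2 1 (1 - v1) (1 - v2).

Definition Kraw2_gen x1 x2 : {poly {poly C}} := w0 ^+ (N - x1 - x2) * w1 ^+ x1 * w2 ^+ x2.

Lemma coef2_Kraw2_gen x1 x2 m1 m2 : (x1 + x2 <= N)%N -> (m1 + m2 <= N)%N ->
  coef2 (Kraw2_gen x1 x2) m1 m2 = (trinomial_coef N m1 m2)%:R * Kraw2 N u1 v1 u2 v2 m1 m2 x1 x2.
Proof.
move=> le_xN le_mN.
have lin2B a b : lin2 1 (1 - a) (1 - b) = w0 + (- a)%:P2 * X1 + (- b)%:P2 * X2.
  by rewrite /w0 /lin2; ring.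
rewrite /Kraw2_gen /w1 /w2 !lin2B (@exprD3n _ _ _ _ x1 N.+1) ?(@exprD3n _ _ _ _ x2 N.+1); try lia.
rewrite mulr_sum2_sum2 /Kraw2 coef2_sum mulr_sumr; apply: eq_bigr => i _.
rewrite coef2_sum mulr_sumr; apply: eq_bigr => j _.
rewrite coef2_sum mulr_sumr; apply: eq_bigr => k _.
rewrite coef2_sum mulr_sumr; apply: eq_bigr => l _.
rewrite Kraw2_termE //.
have [le_ik|_] := leqP (i + k) x1; last by rewrite mulr0 mul0r /coef2 !coef0.
have [le_jl|_] := leqP (j + l) x2; last by rewrite mulr0 /coef2 !coef0.
have -> : (N - (i + j + k + l) = (N - x1 - x2) + (x1 - i - k) + (x2 - j - l))%N by lia.
have -> : w0 ^+ (N - x1 - x2)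
      * ((trinomial_coef x1 i k)%:R * w0 ^+ (x1 - i - k)
         * ((- u1)%:P2 * X1) ^+ i * ((- u2)%:P2 * X2) ^+ k)
      * ((trinomial_coef x2 j l)%:R * w0 ^+ (x2 - j - l)
         * ((- v1)%:P2 * X1) ^+ j * ((- v2)%:P2 * X2) ^+ l)
    = ((trinomial_coef x1 i k)%:R * (trinomial_coef x2 j l)%:R
       * ((- u1) ^+ i * (- v1) ^+ j * (- u2) ^+ k * (- v2) ^+ l))%:P2
      * w0 ^+ (N - x1 - x2 + (x1 - i - k) + (x2 - j - l)) * X1 ^+ (i + j) * X2 ^+ (k + l).
  by rewrite !exprD !exprMn !rmorphM !rmorphXn !rmorph_nat; ring.
rewrite coef2_mulX12 coef2_polyC2M coef2_lin2X /=; case: ifP => // /andP[le_ij le_kl].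
by rewrite ifT ?expr1n ?mulr1 1?mulrAC //; lia.
Qed.

Local Notation R4 := {poly {poly {poly {poly C}}}}.

(* R4 holds polynomials in (t1, t2) whose coefficients are polynomials in
   (s1, s2); in_s and in_t read a bivariate polynomial in s, resp. in t. *)
Let fromC : {rmorphism C -> {poly {poly C}}} := polyC \o polyC.
Let in_s : {rmorphism {poly {poly C}} -> R4} := polyC \o polyC.
Let in_t : {rmorphism {poly {poly C}} -> R4} := map_poly (map_poly (polyC \o polyC)).

Lemma coef2_in_t p i j : coef2 (in_t p) i j = (coef2 p i j)%:P2.
Proof. by rewrite /coef2 /in_t /= !coef_map. Qed.

Lemma in_t_lin2 (c0 c1 c2 : C) : in_t (lin2 c0 c1 c2) = lin2 c0%:P2 c1%:P2 c2%:P2.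
Proof.
have in_tC c : in_t c%:P2 = c%:P2%:P2 by rewrite /in_t /= map_polyC /= map_polyC.
have in_tX1 : in_t X1 = X1 by rewrite /in_t /X1 /= map_polyX.
have in_tX2 : in_t X2 = X2 by rewrite /in_t /X2 /= map_polyC /= map_polyX.
by rewrite /lin2 !rmorphD !rmorphM !in_tC in_tX1 in_tX2.
Qed.

Definition Kraw2_bilin_gen : R4 := \sum_(x1 < N.+1) \sum_(x2 < N.+1)
  (if (x1 + x2 <= N)%N then
     in_s (fromC (trinom N x1 x2 eta1 eta2) * Kraw2_gen x1 x2) * in_t (Kraw2_gen x1 x2)
   else 0).

Definition Kraw2_kernel : R4 := in_s (fromC (1 - eta1 - eta2) * w0) * in_t w0
  + in_s (fromC eta1 * w1) * in_t w1 + in_s (fromC eta2 * w2) * in_t w2.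

Definition Kraw2_dot m1 m2 n1 n2 : C := \sum_(x1 < N.+1) \sum_(x2 < N.+1)
  (if (x1 + x2 <= N)%N then
     trinom N x1 x2 eta1 eta2 * Kraw2 N u1 v1 u2 v2 m1 m2 x1 x2 * Kraw2 N u1 v1 u2 v2 n1 n2 x1 x2
   else 0).

Lemma trinomE x1 x2 : (x1 + x2 <= N)%N -> trinom N x1 x2 eta1 eta2 =
  (trinomial_coef N x1 x2)%:R * eta1 ^+ x1 * eta2 ^+ x2 * (1 - eta1 - eta2) ^+ (N - x1 - x2).
Proof. by move=> le_xN; rewrite /trinom (trinomial_coefE C le_xN) !natrM. Qed.

Lemma Kraw2_bilin_genE : Kraw2_bilin_gen = Kraw2_kernel ^+ N.
Proof.
rewrite /Kraw2_kernel (exprD3n _ _ _ (ltnSn N)); apply: eq_bigr => x1 _; apply: eq_bigr => x2 _.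
by case: ifP => // le_xN; rewrite trinomE //; exact: rmorph_trinomial_term.
Qed.

Lemma coef2_Kraw2_bilin_gen m1 m2 n1 n2 : (m1 + m2 <= N)%N -> (n1 + n2 <= N)%N ->
  coef2 (coef2 Kraw2_bilin_gen n1 n2) m1 m2
  = (trinomial_coef N m1 m2 * trinomial_coef N n1 n2)%:R * Kraw2_dot m1 m2 n1 n2.
Proof.
move=> le_mN le_nN; rewrite /Kraw2_dot mulr_sumr !coef2_sum; apply: eq_bigr => x1 _.
rewrite mulr_sumr !coef2_sum; apply: eq_bigr => x2 _.
case: ifP => [le_xN|_]; last by rewrite mulr0 /coef2 !coef0.
rewrite -[in_s _]/(_%:P2) coef2_polyC2M coef2_in_t coef2_mulpolyC2 -[fromC _]/(_%:P2).
by rewrite coef2_polyC2M !coef2_Kraw2_gen // natrM; ring.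
Qed.

Local Notation alpha1 := (eta1 * u1 + eta2 * v1).
Local Notation alpha2 := (eta1 * u2 + eta2 * v2).
Local Notation beta := (eta1 * u1 * u2 + eta2 * v1 * v2).
Local Notation delta1 := ((1 - eta1 - eta2) + eta1 * (1 - u1) ^+ 2 + eta2 * (1 - v1) ^+ 2).
Local Notation delta2 := ((1 - eta1 - eta2) + eta1 * (1 - u2) ^+ 2 + eta2 * (1 - v2) ^+ 2).

Lemma Kraw2_kernelE : Kraw2_kernel =
  lin2 (lin2 1 (1 - alpha1) (1 - alpha2))
       (lin2 (1 - alpha1) delta1 (beta - alpha1 - alpha2 + 1))
       (lin2 (1 - alpha2) (beta - alpha1 - alpha2 + 1) delta2).
Proof.
rewrite /Kraw2_kernel !in_t_lin2 -![in_s _]/(_%:P2) lin2_sum3 -![fromC _]/(_%:P2) /w0 /w1 /w2.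
rewrite !(lin2_sum3M (1 - eta1 - eta2) eta1 eta2).
by apply: f_equal3; apply: f_equal3; ring.
Qed.

Lemma coef2_Kraw2_kernelX_10 : coef2 (coef2 (Kraw2_kernel ^+ N) 0 0) 1 0 = N%:R * (1 - alpha1).
Proof.
by rewrite coef2X00 Kraw2_kernelE coef2_lin2_00 coef2X10 ?coef2_lin2_00 // coef2_lin2_10.
Qed.

Lemma coef2_Kraw2_kernelX_01 : coef2 (coef2 (Kraw2_kernel ^+ N) 0 0) 0 1 = N%:R * (1 - alpha2).
Proof.
by rewrite coef2X00 Kraw2_kernelE coef2_lin2_00 coef2X01 ?coef2_lin2_00 // coef2_lin2_01.
Qed.

Lemma coef2_Kraw2_kernelX_11 : alpha1 = 1 -> alpha2 = 1 ->
  coef2 (coef2 (Kraw2_kernel ^+ N) 0 1) 1 0 = N%:R * (beta - 1).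
Proof.
move=> a1E a2E; rewrite Kraw2_kernelE a1E a2E subrr lin2_100.
rewrite coef2X01 ?coef2_lin2_00 // coef2_lin2_01 coef2_natM coef2_lin2_10.
by congr (_ * _); ring.
Qed.

Lemma Kraw2_kernel_diag : alpha1 = 1 -> alpha2 = 1 -> beta = 1 ->
  Kraw2_kernel = lin2 1 (lin2 0 delta1 0) (lin2 0 0 delta2).
Proof.
by move=> a1E a2E bE; rewrite Kraw2_kernelE a1E a2E bE subrr lin2_100 sub0r addNr.
Qed.

Lemma Kraw2_orthogonalE : Kraw2_orthogonal N eta1 eta2 u1 v1 u2 v2 <->
  (forall m1 m2 n1 n2, (m1 + m2 <= N)%N -> (n1 + n2 <= N)%N ->
     (m1, m2) != (n1, n2) -> coef2 (coef2 (Kraw2_kernel ^+ N) n1 n2) m1 m2 = 0).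
Proof.
rewrite -Kraw2_bilin_genE; split=> orth m1 m2 n1 n2 le_mN le_nN ne_mn.
  by rewrite coef2_Kraw2_bilin_gen // [Kraw2_dot _ _ _ _](orth _ _ _ _ le_mN le_nN (elimN eqP ne_mn)) mulr0.
move: (orth _ _ _ _ le_mN le_nN (introN eqP ne_mn)); rewrite coef2_Kraw2_bilin_gen // natrM => /eqP.
by rewrite !mulf_eq0 !(negbTE (trinomial_coef_neq0 C _)) //= => /eqP.
Qed.
End GeneratingFunction.

Theorem mainTheorem2 (C : numClosedFieldType) (N : nat) (eta1 eta2 u1 v1 u2 v2 : C) :
  (1 <= N)%N ->
  0 < eta1 -> eta1 < 1 -> 0 < eta2 -> eta2 < 1 -> eta1 + eta2 < 1 ->
  (Kraw2_orthogonal N eta1 eta2 u1 v1 u2 v2 ->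
     [/\ eta1 * u1 + eta2 * v1 = 1, eta1 * u2 + eta2 * v2 = 1
       & eta1 * u1 * u2 + eta2 * v1 * v2 = 1])
  /\
  (u1 \notin [:: 0; 1] -> u2 \notin [:: 0; 1] ->
   v1 \notin [:: 0; 1] -> v2 \notin [:: 0; 1] -> u1 * v2 - u2 * v1 != 0 ->
   [/\ eta1 * u1 + eta2 * v1 = 1, eta1 * u2 + eta2 * v2 = 1
     & eta1 * u1 * u2 + eta2 * v1 * v2 = 1] ->
   Kraw2_orthogonal N eta1 eta2 u1 v1 u2 v2).
Proof.
move=> N_gt0 _ _ _ _ _.
have N_mulI (x : C) : N%:R * x = 0 -> x = 0.
  by move/eqP; rewrite mulf_eq0 pnatr_eq0 eqn0Ngt N_gt0 => /eqP.
split=> [/Kraw2_orthogonalE orth | _ _ _ _ _ [a1E a2E bE]].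
  have a1E : eta1 * u1 + eta2 * v1 = 1.
    move: (orth 1 0 0 0 N_gt0 (leq0n N) isT).
    by rewrite coef2_Kraw2_kernelX_10 => /N_mulI/subr0_eq.
  have a2E : eta1 * u2 + eta2 * v2 = 1.
    move: (orth 0 1 0 0 N_gt0 (leq0n N) isT).
    by rewrite coef2_Kraw2_kernelX_01 => /N_mulI/subr0_eq.
  split=> //; move: (orth 1 0 0 1 N_gt0 N_gt0 isT).
  by rewrite coef2_Kraw2_kernelX_11 // => /N_mulI/subr0_eq.
apply/Kraw2_orthogonalE => m1 m2 n1 n2 _ _ ne_mn.
by rewrite Kraw2_kernel_diag //; exact: coef2_lin2X_diag.
Qed.
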